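(* Let $G=(V,E)$ be a connected almost bipartite permutation graph that contains a hole, let $C$ be a shortest hole of $G$, $m=|C|$, and let $c_0,\dots,c_{m-1}$ be the vertices of $C$ in cyclic order (indices modulo $m$). For each $i$ let $A_i=\{v\in V: N(v)\cap C=\{c_{i-1},c_{i+1}\}\}$ and $B_i=\{v\in V: N(v)\cap C=\{c_i\}\}$ (indices of $A,B$ modulo $m$). Then for every $i\in\{0,\dots,m-1\}$: (1) $A_i$ and $B_i$ are independent sets; (2) for every $u\in A_i$ and every $w\in B_i$ we have $uw\in E$; (3) for every $u\in A_i$ we have $B_i\subseteq N(u)\subseteq B_{i-2}\cup A_{i-1}\cup B_i\cup A_{i+1}\cup B_{i+2}$; (4) for every $w\in B_i$ we have $A_i\subseteq N(w)\subseteq A_{i-2}\cup B_{i-1}\cup A_i\cup B_{i+1}\cup A_{i+2}$.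
   Context: All graphs are finite, simple, undirected; $N(v)$ is the open neighborhood of $v$. A hole is an induced cycle on at least five vertices. $K_3$ is the triangle, $C_k$ the cycle on $k$ vertices. $T_2$ is the tree on 7 vertices obtained from the claw $K_{1,3}$ by subdividing each edge once. $X_2$ is the 7-vertex graph obtained from a 4-cycle by attaching one new pendant vertex to each of three of its four vertices. $X_3$ is the 7-vertex graph obtained from the domino (two 4-cycles sharing exactly one edge) by attaching one new pendant vertex to one endpoint of the shared edge. A graph is an almost bipartite permutation graph if it contains none of $T_2, X_2, X_3, K_3, C_5,\dots,C_9$ as an induced subgraph. *)

From mathcomp Require Import all_boot.
Set Implicit Arguments. Unset Strict Implicit. Unset Printing Implicit Defensive.

Definition simple_graph (T : finType) (e : rel T) : Prop :=
  symmetric e /\ irreflexive e.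

Definition connected_graph (T : finType) (e : rel T) : Prop :=
  forall x y : T, connect e x y.

Definition nbhd (T : finType) (e : rel T) (v : T) : {set T} := [set x | e v x].

Definition induced_sub (n : nat) (h : rel 'I_n) (T : finType) (e : rel T) : Prop :=
  exists f : 'I_n -> T, injective f /\ forall x y, e (f x) (f y) = h x y.

Definition cycle_rel (k : nat) : rel 'I_k :=
  fun i j => ((i.+1 %% k) == j) || ((j.+1 %% k) == i).

Definition edge_list_rel (n : nat) (l : seq (nat * nat)) : rel 'I_n :=
  fun i j => ((nat_of_ord i, nat_of_ord j) \in l) || ((nat_of_ord j, nat_of_ord i) \in l).

(* T2: claw with centre 0, leaves 1,2,3, each edge subdivided (4,5,6). *)
Definition T2_rel : rel 'I_7 :=
  @edge_list_rel 7 [:: (0,4); (4,1); (0,5); (5,2); (0,6); (6,3)].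
(* X2: 4-cycle 0-1-2-3-0 with pendants 4 at 0, 5 at 1, 6 at 2. *)
Definition X2_rel : rel 'I_7 :=
  @edge_list_rel 7 [:: (0,1); (1,2); (2,3); (3,0); (0,4); (1,5); (2,6)].
(* X3: domino = 4-cycles 0-1-2-3-0 and 1-4-5-2-1 sharing edge 12;
   pendant 6 attached to 1 (an endpoint of the shared edge). *)
Definition X3_rel : rel 'I_7 :=
  @edge_list_rel 7 [:: (0,1); (1,2); (2,3); (3,0); (1,4); (4,5); (5,2); (1,6)].

Definition almost_bip_perm (T : finType) (e : rel T) : Prop :=
  ~ induced_sub T2_rel e /\ ~ induced_sub X2_rel e /\ ~ induced_sub X3_rel e /\
  ~ induced_sub (@cycle_rel 3) e /\
  (forall k, 5 <= k <= 9 -> ~ induced_sub (@cycle_rel k) e).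

Definition is_hole (T : finType) (e : rel T) (m : nat) (c : nat -> T) : Prop :=
  5 <= m /\
  (forall i j, i < m -> j < m -> c i = c j -> i = j) /\
  (forall i j, i < m -> j < m ->
     e (c i) (c j) = ((i.+1 %% m) == j) || ((j.+1 %% m) == i)).

Definition shortest_hole (T : finType) (e : rel T) (m : nat) (c : nat -> T) : Prop :=
  is_hole e m c /\ forall m' c', is_hole e m' c' -> m <= m'.

Definition hole_set (T : finType) (m : nat) (c : nat -> T) : {set T} :=
  [set v | [exists i : 'I_m, c i == v]].

Definition cv (T : finType) (m : nat) (c : nat -> T) (k : nat) : T := c (k %% m).

(* A_i = {v : N(v) ∩ C = {c_(i-1), c_(i+1)}} ; i - 1 computed as i + m - 1 mod m *)
Definition Aset (T : finType) (e : rel T) (m : nat) (c : nat -> T) (i : nat) : {set T} :=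
  [set v | nbhd e v :&: hole_set m c == [set cv m c (i + m - 1); cv m c i.+1]].

Definition Bset (T : finType) (e : rel T) (m : nat) (c : nat -> T) (i : nat) : {set T} :=
  [set v | nbhd e v :&: hole_set m c == [set cv m c i]].

Definition independent (T : finType) (e : rel T) (S : {set T}) : Prop :=
  forall u v, u \in S -> v \in S -> ~~ e u v.

(* A vertex x off the shortest hole C that is adjacent to c_k has exactly {c_k},
   {c_k, c_(k+2)} or {c_(k-2), c_k} as neighbours on C: any other choice closes a
   triangle or a shorter hole along an arc of C, except when x sees c_k, c_(k+2), c_(k+4);
   then x also sees c_(k+6) and spans an induced T2 with c_k, c_(k+4), c_(k+6) and their
   outer neighbours on C.  Since C5, ..., C9 are excluded, C has length at least 10, so
   these configurations lie on an induced path of C.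
   A vertex u of A_i has the same neighbours on C as c_i, so replacing c_i by u gives
   another shortest hole; reading the neighbours of u on it places them in the five sets
   of (3), except for a neighbour seeing none of c_(i-2), ..., c_(i+2), which spans an
   X2 with u, c_i and C.  The same X2, with the roles of u and c_i exchanged, makes A_i
   complete to B_i.  A neighbour of w in B_i sees c_(i-1) or c_(i+1) (otherwise C5 or
   T2 appears), and reading C from there gives (4).  Independence is triangle-freeness. *)

From mathcomp Require Import all_boot zify.
Set Implicit Arguments. Unset Strict Implicit. Unset Printing Implicit Defensive.

Definition twinfree_graph (n : nat) (h : nat -> nat -> bool) : bool :=
  all (fun a => all (fun b =>
    [&& h a b == h b a, (a == b) ==> ~~ h a b
      & (a == b) || has (fun x => h a x != h b x) (iota 0 n)]) (iota 0 n)) (iota 0 n).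

Section InducedSubgraphs.
Variables (T : finType) (e : rel T).
Hypotheses (e_sym : symmetric e) (e_irr : irreflexive e).

(* Injectivity of the embedding comes for free: in a twin-free pattern graph
   distinct vertices are told apart by some third vertex.  The pattern is also given
   on nat, as [hn], so that [twinfree_graph] is decided by computation. *)
Lemma induced_sub_seq n (h : rel 'I_n) (hn : nat -> nat -> bool) (x0 : T) (s : seq T) :
  (forall a b : 'I_n, h a b = hn a b) -> twinfree_graph n hn ->
  (forall a b : 'I_n, a < b -> e (nth x0 s a) (nth x0 s b) = h a b) -> induced_sub h e.
Proof.
move=> hE /allP twinfree lt_sub.
have hP (a b : 'I_n) : [/\ h a b = h b a, (a == b) ==> ~~ h a b
    & (a == b) || has (fun x => hn a x != hn b x) (iota 0 n)].
  move: (twinfree a); rewrite mem_iota add0n ltn_ord => /(_ isT) /allP /(_ b).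
  by rewrite !hE mem_iota add0n ltn_ord => /(_ isT) /and3P [/eqP].
have sub (a b : 'I_n) : e (nth x0 s a) (nth x0 s b) = h a b.
  case: (ltngtP a b) => [/lt_sub //|/lt_sub|/val_inj->].
  - by rewrite e_sym; case: (hP a b) => ->.
  - by rewrite e_irr; case: (hP b b) => _; rewrite eqxx => /negbTE.
exists (fun a => nth x0 s a); split=> // a b eq_ab; apply/eqP/negPn/negP => neq_ab.
case: (hP a b) => _ _; rewrite (negbTE neq_ab) => /hasP [x]; rewrite mem_iota /= => lt_xn.
by rewrite -[x]/(nat_of_ord (Ordinal lt_xn)) -!hE -!sub eq_ab eqxx.
Qed.

End InducedSubgraphs.

Ltac compute_rhs := match goal with |- ?l = ?r => let r' := eval compute in r in change (l = r') end.

(* For a pattern [H] on at most 7 vertices, [induced_by s] reduces [induced_sub H e] to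
   one goal [e s_a s_b = H a b] per pair a < b of positions in [s], with [H a b] computed. *)
Ltac induced_by s :=
  let a := fresh "a" in let b := fresh "b" in
  let Ha := fresh "Ha" in let Hb := fresh "Hb" in
  let x0 := match s with ?x :: _ => x end in
  let sym := match goal with H : symmetric _ |- _ => H end in
  let irr := match goal with H : irreflexive _ |- _ => H end in
  unfold T2_rel, X2_rel;
  lazymatch goal with
  | |- induced_sub (@cycle_rel ?k) _ =>
      apply: (@induced_sub_seq _ _ sym irr k (@cycle_rel k)
                (fun u v => (u.+1 %% k == v) || (v.+1 %% k == u)) x0 s (fun _ _ => erefl))
  | |- induced_sub (@edge_list_rel ?n ?l) _ =>
      apply: (@induced_sub_seq _ _ sym irr n (@edge_list_rel n l)
                (fun u v => ((u, v) \in l) || ((v, u) \in l)) x0 s (fun _ _ => erefl))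
  end => //;
  move=> [a Ha] [b Hb] /=;
  case: a Ha => [|[|[|[|[|[|[|a]]]]]]] Ha //;
  case: b Hb => [|[|[|[|[|[|[|b]]]]]]] Hb //= _; compute_rhs.

Lemma eqmod_addm a b m : a = b \/ a = b + m -> a = b %[mod m].
Proof. by case=> ->; rewrite ?modnDr. Qed.

Definition hole_trace (T : finType) (e : rel T) (m : nat) (c : nat -> T)
    (j : nat) (x : T) (p : pred nat) : Prop :=
  forall t, t < m -> e x (cv m c (j + t)) = p t.

Section HoleIndexing.
Variables (T : finType) (e : rel T) (m : nat) (c : nat -> T).

Lemma cv_congr a b : a = b %[mod m] -> cv m c a = cv m c b.
Proof. by rewrite /cv => ->. Qed.

Lemma Bset_congr k1 k2 : k1 = k2 %[mod m] -> Bset e m c k1 = Bset e m c k2.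
Proof. by move=> /cv_congr eq_k; rewrite /Bset eq_k. Qed.

Lemma Aset_congr k1 k2 : k1 = k2 %[mod m] -> Aset e m c k1 = Aset e m c k2.
Proof.
move=> eq_k; rewrite /Aset (@cv_congr k1.+1 k2.+1) ?(@cv_congr (k1 + m - 1) (k2 + m - 1)) //.
  case: m eq_k => [|n] eq_k; first by move: eq_k; rewrite !modn0 => ->.
  by rewrite !addnS !subn1 /= -modnDml eq_k modnDml.
by rewrite -[k1.+1]addn1 -[k2.+1]addn1 -modnDml eq_k modnDml.
Qed.

Lemma modn_succ x : x < m -> x.+1 %% m = if x.+1 == m then 0 else x.+1.
Proof. by move=> lt_xm; case: eqP => [->|ne]; rewrite ?modnn // modn_small //; lia. Qed.

Hypothesis c_hole : is_hole e m c.

Lemma hole_gt4 : 4 < m. Proof. by case: c_hole. Qed.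

Let m_gt0 : 0 < m. Proof. by have := hole_gt4; lia. Qed.

Lemma cv_in_hole k : cv m c k \in hole_set m c.
Proof. by rewrite inE; apply/existsP; exists (Ordinal (ltn_pmod k m_gt0)). Qed.

Lemma hole_setP j v : v \in hole_set m c -> exists2 t, t < m & v = cv m c (j + t).
Proof.
rewrite inE => /existsP [[k lt_km] /= /eqP <-].
exists ((k + (m - j %% m)) %% m); first exact: ltn_pmod.
rewrite /cv modnDmr {1}(divn_eq j m).
have: j %% m < m by exact: ltn_pmod.
move: (j %/ m) (j %% m) => q r lt_rm.
have -> : q * m + r + (k + (m - r)) = q.+1 * m + k by rewrite mulSn; lia.
by rewrite modnMDl modn_small.
Qed.

Lemma eq_cv_offset j a b : a < m -> b < m -> (cv m c (j + a) == cv m c (j + b)) = (a == b).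
Proof.
move=> lt_am lt_bm; apply/eqP/eqP => [|-> //].
case: c_hole => _ [c_inj _] /(c_inj _ _ (ltn_pmod _ m_gt0) (ltn_pmod _ m_gt0)) /eqP.
by rewrite eqn_modDl !modn_small // => /eqP.
Qed.

Lemma adj_cv_offset j a b : a < m -> b < m ->
  e (cv m c (j + a)) (cv m c (j + b)) = (a.+1 %% m == b) || (b.+1 %% m == a).
Proof.
move=> lt_am lt_bm; case: c_hole => _ [_ c_adj].
have modS x : (x %% m).+1 %% m = x.+1 %% m by rewrite -addn1 modnDml addn1.
by rewrite /cv c_adj ?ltn_pmod // !modS -!addnS !eqn_modDl (modn_small lt_am) (modn_small lt_bm).
Qed.

Lemma adj_cv_window j a b : a.+1 < m -> b.+1 < m ->
  e (cv m c (j + a)) (cv m c (j + b)) = (a.+1 == b) || (b.+1 == a).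
Proof. by move=> lt_am lt_bm; rewrite adj_cv_offset ?modn_small //; lia. Qed.


Local Notation trace := (hole_trace e m c).

Lemma eq_hole_trace j x p q : (forall t, t < m -> p t = q t) -> trace j x p -> trace j x q.
Proof. by move=> pq tr t lt_tm; rewrite -pq ?tr. Qed.

Lemma hole_trace_shift j s x p : s <= m ->
  trace (j + s) x p -> trace j x (fun t => p (if s <= t then t - s else t + (m - s))).
Proof.
move=> le_sm tr t lt_tm; set t' := if s <= t then _ else _.
have [lt_t'm t'E] : t' < m /\ j + s + t' = j + t %[mod m].
  rewrite /t'; clear tr; case: (leqP s t) => st /=.
    by split; [lia | apply: eqmod_addm; lia].
  by split; [lia | apply: eqmod_addm; lia].
by rewrite -tr // (cv_congr t'E).
Qed.

Lemma mem_nbhd x v : (v \in nbhd e x) = e x v. Proof. by rewrite inE. Qed.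

Lemma nbhd_hole_trace j x a b : a < m -> b < m ->
  nbhd e x :&: hole_set m c = [set cv m c (j + a); cv m c (j + b)] <-> trace j x (pred2 a b).
Proof.
move=> lt_am lt_bm; split=> [nbhdE t lt_tm | tr].
  by rewrite -mem_nbhd -[_ \in nbhd e x]andbT -(cv_in_hole (j + t)) -in_setI nbhdE
    in_set2 !eq_cv_offset.
apply/setP => v; rewrite in_setI in_set2 mem_nbhd.
case: (boolP (v \in hole_set m c)) => [/(hole_setP j) [t lt_tm ->]|v_out].
  by rewrite andbT tr // !eq_cv_offset.
rewrite andbF; apply/esym/negbTE; apply: contra v_out => /orP [] /eqP ->; exact: cv_in_hole.
Qed.

Lemma Bset_trace {j a x} : a < m -> x \in Bset e m c (j + a) <-> trace j x (pred1 a).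
Proof.
move=> lt_am; rewrite inE -[[set _]]setUid.
split=> [/eqP/(nbhd_hole_trace _ _ lt_am lt_am) tr t lt_tm | tr].
  by rewrite tr //= orbb.
by apply/eqP/(nbhd_hole_trace _ _ lt_am lt_am) => t lt_tm; rewrite tr //= orbb.
Qed.

Lemma Aset_trace {j a x} : a.+2 < m -> x \in Aset e m c (j + a.+1) <-> trace j x (pred2 a a.+2).
Proof.
move=> lt_a2m; rewrite inE -addnS (@cv_congr (j + a.+1 + m - 1) (j + a)); last first.
  by rewrite (_ : _ - 1 = j + a + m) ?modnDr //; lia.
have lt_am : a < m by lia.
by split=> [/eqP/(nbhd_hole_trace _ _ lt_am lt_a2m) | /(nbhd_hole_trace _ _ lt_am lt_a2m)/eqP].
Qed.

Lemma hole_vertex_trace j a : a.+2 < m -> trace j (cv m c (j + a.+1)) (pred2 a a.+2).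
Proof.
move=> lt_a2m t lt_tm.
rewrite adj_cv_offset ?(ltnW lt_a2m) // (modn_small lt_a2m) modn_succ //=.
by case: ifP; lia.
Qed.

Lemma hole_vertex_of_trace j a v : a.+2 < m -> v \in hole_set m c ->
  trace j v (pred2 a a.+2) -> v = cv m c (j + a.+1).
Proof.
move=> lt_a2m /(hole_setP j) [t lt_tm ->] tr; congr (cv m c (j + _)).
have := tr a.+2 lt_a2m; have := tr a (ltnW (ltnW lt_a2m)); have := hole_gt4.
rewrite !adj_cv_offset ?(ltnW lt_a2m) ?(ltnW (ltnW lt_a2m)) //.
rewrite modn_succ // (modn_small (ltnW lt_a2m)) modn_succ //=.
by case: ifP; case: ifP; lia.
Qed.

Lemma trace_twin j p u v : trace j u p -> trace j v p ->
  forall b, b < m -> e u (c b) = e v (c b).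
Proof.
move=> tr_u tr_v b lt_bm.
have /(hole_setP j) [t lt_tm cbE] : cv m c b \in hole_set m c := cv_in_hole b.
by move: cbE; rewrite /cv modn_small // => ->; rewrite tr_u ?tr_v.
Qed.

End HoleIndexing.

Lemma mem_hole_swap (T : finType) m (c : nat -> T) k u v :
  v \in hole_set m [eta c with k |-> u] -> v = u \/ v \in hole_set m c.
Proof.
rewrite inE => /existsP [b] /=; case: ifP => _ /eqP <-; first by left.
by right; rewrite inE; apply/existsP; exists b.
Qed.

Lemma cv_swap (T : finType) m (c : nat -> T) j s u t : s < m -> t < m ->
  cv m [eta c with (j + s) %% m |-> u] (j + t) = if t == s then u else cv m c (j + t).
Proof. by move=> lt_sm lt_tm; rewrite /cv /= eqn_modDl (modn_small lt_sm) (modn_small lt_tm). Qed.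

Section HoleSurgery.
Variables (T : finType) (e : rel T) (m : nat) (c : nat -> T).
Hypotheses (e_sym : symmetric e) (e_irr : irreflexive e) (c_hole : is_hole e m c).

Lemma swap_is_hole k u : k < m -> u \notin hole_set m c \/ u = c k ->
  (forall b, b < m -> e u (c b) = e (c k) (c b)) -> is_hole e m [eta c with k |-> u].
Proof.
move=> lt_km u_new u_twin; have [m_ge5 [c_inj c_adj]] := c_hole.
have c_in b : b < m -> c b \in hole_set m c.
  by move=> lt_bm; rewrite inE; apply/existsP; exists (Ordinal lt_bm).
have u_neq b : b < m -> b != k -> u != c b.
  move=> lt_bm ne_bk; apply/eqP => u_cb; case: u_new => [|u_ck].
    by rewrite u_cb c_in.
  by move: ne_bk; rewrite (c_inj b k) ?eqxx // -u_cb.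
split=> //; split=> a b lt_am lt_bm /=.
  case: (eqVneq a k) => [->|ne_ak]; case: (eqVneq b k) => [->|ne_bk] //.
  - by move/eqP; rewrite (negbTE (u_neq b lt_bm ne_bk)).
  - by move=> /esym/eqP; rewrite (negbTE (u_neq a lt_am ne_ak)).
  - exact: c_inj.
case: (eqVneq a k) => [->|ne_ak]; case: (eqVneq b k) => [->|ne_bk].
- by rewrite e_irr -c_adj // e_irr.
- by rewrite u_twin // c_adj.
- by rewrite e_sym u_twin // e_sym c_adj.
- exact: c_adj.
Qed.

Lemma hole_trace_swap j s u x p q : s < m ->
  hole_trace e m [eta c with (j + s) %% m |-> u] j x p ->
  q s = e x (cv m c (j + s)) -> (forall t, t != s -> p t = q t) -> hole_trace e m c j x q.
Proof.
move=> lt_sm tr_x q_s pq t lt_tm; case: (eqVneq t s) => [-> //|ne_ts].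
by rewrite -pq // -tr_x // cv_swap // (negbTE ne_ts).
Qed.

Lemma arc_hole x J k : x \notin hole_set m c -> 3 <= k -> k + 3 <= m ->
  e x (cv m c J) -> e x (cv m c (J + k)) -> (forall t, 0 < t < k -> ~~ e x (cv m c (J + t))) ->
  is_hole e k.+2 (fun t => if t <= k then cv m c (J + t) else x).
Proof.
move=> x_out k_ge3 k_le x0 xk x_gap.
have xE a : a <= k -> e x (cv m c (J + a)) = (a == 0) || (a == k).
  move=> le_ak; case: (posnP a) => [->|a_gt0]; first by rewrite addn0 x0.
  case: (ltngtP a k) => [lt_ak|gt_ak|->]; [|lia|by rewrite xk orbT].
  by rewrite (negbTE (x_gap a _)) ?a_gt0 //; apply/esym/negbTE; lia.
have cv_neq t : cv m c (J + t) != x.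
  by apply/eqP => cv_x; move: x_out; rewrite -cv_x (cv_in_hole c_hole).
split; first lia.
split=> a b lt_a lt_b.
  case: (leqP a k) => le_ak; case: (leqP b k) => le_bk.
  - by move/eqP; rewrite (eq_cv_offset c_hole) => [/eqP||]; lia.
  - by move/eqP; rewrite (negbTE (cv_neq a)).
  - by move/esym/eqP; rewrite (negbTE (cv_neq b)).
  - lia.
have modS t : t <= k -> t.+1 %% k.+2 = t.+1 by move=> ?; rewrite modn_small; lia.
have wrap : k.+2 %% k.+2 = 0 by rewrite modnn.
case: (leqP a k) => le_ak; case: (leqP b k) => le_bk /=.
- by rewrite (adj_cv_window c_hole) ?modS //; lia.
- have -> : b = k.+1 by lia.
  by rewrite e_sym xE // wrap modS // eqSS [0 == a]eq_sym orbC.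
- have -> : a = k.+1 by lia.
  by rewrite xE // wrap modS // eqSS [0 == b]eq_sym.
- have [-> ->] : a = k.+1 /\ b = k.+1 by lia.
  by rewrite e_irr wrap.
Qed.

End HoleSurgery.

Section AlmostBipartitePermutationGraphs.
Variables (T : finType) (e : rel T).
Hypotheses (e_sym : symmetric e) (e_irr : irreflexive e) (e_abp : almost_bip_perm e).

Lemma triangle_free a b d : e a b -> e b d -> e a d -> False.
Proof.
move=> ab bd ad; case: e_abp => _ [_ [_ [noC3 _]]]; apply: noC3.
by induced_by [:: a; b; d]; rewrite ?(e_sym b a) ?(e_sym d a) ?(e_sym d b).
Qed.

Lemma shortest_hole_ge10 m c : shortest_hole e m c -> 10 <= m.
Proof.
case=> [[m_ge5 [c_inj c_adj]] _]; rewrite leqNgt; apply/negP => m_le9.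
case: e_abp => _ [_ [_ [_ noC]]]; apply: (noC m); first by lia.
exists (fun k : 'I_m => c k); split=> [a b /(c_inj _ _ (ltn_ord a) (ltn_ord b))|a b].
  exact: val_inj.
exact: c_adj.
Qed.

Section PathConfigurations.
Variable d : nat -> T.
Hypothesis d_path : forall a b, a < 8 -> b < 8 -> e (d a) (d b) = (a.+1 == b) || (b.+1 == a).

Lemma no_T2_spider x : e x (d 0) -> e x (d 4) -> e x (d 6) ->
  ~~ e x (d 1) -> ~~ e x (d 3) -> ~~ e x (d 7) -> False.
Proof.
move=> x0 x4 x6 /negbTE x1 /negbTE x3 /negbTE x7; case: e_abp => noT2 _; apply: noT2.
by induced_by [:: x; d 1; d 3; d 7; d 0; d 4; d 6]; rewrite ?d_path.
Qed.

Lemma no_X2_twins a b y :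
  (forall t, t < 5 -> t != 2 -> e a (d t) = odd t) ->
  (forall t, t < 5 -> t != 2 -> e b (d t) = odd t) ->
  ~~ e a b -> e y b -> ~~ e y a -> (forall t, t < 5 -> t != 2 -> ~~ e y (d t)) -> False.
Proof.
move=> a_tr b_tr /negbTE ab yb /negbTE ya y_out; case: e_abp => _ [noX2 _]; apply: noX2.
have y_tr t : t < 5 -> t != 2 -> e y (d t) = false by move=> *; apply/negbTE/y_out.
induced_by [:: d 1; b; d 3; a; d 0; y; d 4];
  (by rewrite ?d_path ?a_tr ?b_tr ?y_tr) || by rewrite e_sym ?d_path ?a_tr ?b_tr ?y_tr.
Qed.

Lemma pendant_nbr_flank w x : (forall t, t < 5 -> e w (d t) = (t == 2)) -> e w x ->
  e x (d 1) || e x (d 3).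
Proof.
move=> w_tr wx; apply/negPn/negP; rewrite negb_or => /andP [/negbTE x1 /negbTE x3].
have x2 : e x (d 2) = false.
  by apply/negP => x2; apply: (triangle_free wx x2); rewrite w_tr.
have [noT2 [_ [_ [_ noC]]]] := e_abp.
case x4: (e x (d 4)).
  apply: (noC 5) => //; induced_by [:: w; d 2; d 3; d 4; x];
    (by rewrite ?d_path ?w_tr) || by rewrite e_sym ?d_path ?w_tr.
case x0: (e x (d 0)).
  apply: (noC 5) => //; induced_by [:: w; d 2; d 1; d 0; x];
    (by rewrite ?d_path ?w_tr) || by rewrite e_sym ?d_path ?w_tr.
apply: noT2; induced_by [:: d 2; x; d 0; d 4; w; d 1; d 3];
  (by rewrite ?d_path ?w_tr) || by rewrite e_sym ?d_path ?w_tr.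
Qed.

End PathConfigurations.

Section ShortestHole.
Variables (m : nat) (c : nat -> T).
Hypothesis c_short : shortest_hole e m c.

Let c_hole : is_hole e m c := c_short.1.
Let m_ge10 : 10 <= m := shortest_hole_ge10 c_short.
Local Notation trace := (hole_trace e m c).

Lemma shortest_hole_path j : forall a b, a < 8 -> b < 8 ->
  e (cv m c (j + a)) (cv m c (j + b)) = (a.+1 == b) || (b.+1 == a).
Proof. by move=> a b lt_a8 lt_b8; rewrite (adj_cv_window c_hole); lia. Qed.

Lemma hole_nbr_gap x J : x \notin hole_set m c -> e x (cv m c J) -> ~~ e x (cv m c (J + 2)) ->
  forall k, 0 < k -> k + 2 < m -> ~~ e x (cv m c (J + k)).
Proof.
move=> x_out x0 x2 k k_gt0 lt_km; apply/negP => xk.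
pose P k := [&& 0 < k, k + 2 < m & e x (cv m c (J + k))].
have exP : exists k, P k by exists k; rewrite /P k_gt0 lt_km xk.
case: (ex_minnP exP) => k1 /and3P [k1_gt0 lt_k1m xk1] k1_min.
case: (ltngtP k1 2) => [lt_k1_2|gt_k1_2|k1_2]; last by rewrite -k1_2 xk1 in x2.
  have k1_1 : k1 = 1 by lia.
  apply: (triangle_free x0 _ xk1); rewrite k1_1 -{1}(addn0 J) (adj_cv_window c_hole) //; lia.
suff: m <= k1.+2 by lia.
apply: c_short.2 (arc_hole e_sym e_irr c_hole x_out _ _ x0 xk1 _); try lia.
move=> t /andP [t_gt0 lt_tk1]; apply/negP => xt.
suff: k1 <= t by lia.
by apply: k1_min; rewrite /P t_gt0 xt andbT; lia.
Qed.

Lemma hole_nbrs_apart x J a b : e x (cv m c (J + a)) -> e x (cv m c (J + b)) ->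
  a < 9 -> b < 9 -> (a.+1 != b) && (b.+1 != a).
Proof.
move=> xa xb lt_a9 lt_b9; rewrite -negb_or -(adj_cv_window c_hole J); try lia.
by apply/negP => /(triangle_free xa)/(_ xb).
Qed.

Lemma no_spaced_nbr_triple x J : x \notin hole_set m c ->
  e x (cv m c (J + 0)) -> e x (cv m c (J + 2)) -> ~~ e x (cv m c (J + 4)).
Proof.
move=> x_out x0 x2; apply/negP => x4.
have x6 : e x (cv m c (J + 6)).
  apply: contraT => x6; have := hole_nbr_gap x_out x4; rewrite -addnA => /(_ x6 (m - 4)).
  by rewrite (@cv_congr _ _ _ (J + 4 + (m - 4)) (J + 0)) ?x0; [lia | apply: eqmod_addm; lia].
apply: (no_T2_spider (shortest_hole_path J) x0 x4 x6).
- by apply/negP => x1; have := hole_nbrs_apart x0 x1 isT isT.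
- by apply/negP => x3; have := hole_nbrs_apart x2 x3 isT isT.
- by apply/negP => x7; have := hole_nbrs_apart x6 x7 isT isT.
Qed.

Lemma outside_trace_at x J : x \notin hole_set m c -> e x (cv m c J) ->
  [\/ trace J x (pred1 0), trace J x (pred2 0 2) | trace J x (pred2 0 (m - 2))].
Proof.
move=> x_out x0; have xJ : e x (cv m c (J + 0)) by rewrite addn0.
have x1 : e x (cv m c (J + 1)) = false.
  by apply/negP => x1; have := hole_nbrs_apart xJ x1 isT isT.
have x_last : e x (cv m c (J + (m - 1))) = false.
  apply/negP => x_last; apply: (triangle_free x_last _ xJ).
  by rewrite (adj_cv_offset c_hole) ?subn1 ?prednK ?modnn //; lia.
case x2: (e x (cv m c (J + 2))).
  have gap2 := hole_nbr_gap x_out x2; rewrite -addnA in gap2.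
  move/(_ (no_spaced_nbr_triple x_out xJ x2)) in gap2.
  apply: Or32 => t lt_tm; case: (ltnP t 3) => [lt_t3|ge_t3].
    by case: t lt_t3 {lt_tm} => [|[|[|]]] //= _; rewrite ?addn0 ?x1 ?x2.
  have xt : ~~ e x (cv m c (J + 2 + (t - 2))) by apply: gap2; lia.
  by rewrite -addnA (subnKC (ltnW ge_t3)) in xt; rewrite (negbTE xt) /= !gtn_eqF //; lia.
have gap0 := hole_nbr_gap x_out x0 (negbT x2).
have x_mid t : t < m -> t != 0 -> t != m - 2 -> e x (cv m c (J + t)) = false.
  move=> lt_tm t0 tm2; case: (ltnP t (m - 2)) => [lt_tm2|ge_tm2].
    by apply/negbTE/gap0; lia.
  by rewrite (_ : t = m - 1) //; lia.
case x_m2: (e x (cv m c (J + (m - 2)))); [apply: Or33 | apply: Or31] => t lt_tm;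
  case: (eqVneq t 0) => [->|t0]; rewrite ?addn0 ?x0 //;
  case: (eqVneq t (m - 2)) => [->|tm2]; rewrite ?x_m2 ?x_mid //= ?(negbTE t0) ?(negbTE tm2) //.
- by rewrite eqxx orbT.
- by apply/esym/eqP; lia.
Qed.

Lemma outside_trace_cases x j : x \notin hole_set m c -> e x (cv m c (j + 2)) ->
  [\/ trace j x (pred1 2), trace j x (pred2 2 4) | trace j x (pred2 0 2)].
Proof.
move=> x_out /(outside_trace_at x_out).
have le_2m : 2 <= m by lia.
case=> /(hole_trace_shift c_hole le_2m) tr; [apply: Or31 | apply: Or32 | apply: Or33];
  apply: (eq_hole_trace _ tr) => t lt_tm; clear tr;
  by case: (leqP 2 t) => t2 /=; lia.
Qed.

Lemma outside_nbr_mem x j : x \notin hole_set m c -> e x (cv m c (j + 2)) ->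
  x \in Aset e m c (j + 1) :|: Bset e m c (j + 2) :|: Aset e m c (j + 3).
Proof.
have [lt_2m lt_4m] : 2 < m /\ 4 < m by lia.
move=> x_out /(outside_trace_cases x_out) []; rewrite !in_setU.
- by move=> /(Bset_trace c_hole lt_2m) ->; rewrite orbT.
- by move=> /(Aset_trace c_hole lt_4m) ->; rewrite orbT.
- by move=> /(Aset_trace c_hole lt_2m) ->.
Qed.

Lemma Aset_independent k : independent e (Aset e m c k).
Proof.
have nbr v : v \in Aset e m c k -> e v (cv m c k.+1).
  rewrite inE => /eqP vE; have : cv m c k.+1 \in nbhd e v :&: hole_set m c.
    by rewrite vE !inE eqxx orbT.
  by rewrite in_setI mem_nbhd => /andP [].
by move=> u v /nbr uy /nbr vy; apply/negP => uv; exact: triangle_free uv vy uy.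
Qed.

Lemma Bset_independent k : independent e (Bset e m c k).
Proof.
have nbr v : v \in Bset e m c k -> e v (cv m c k).
  rewrite inE => /eqP vE; have : cv m c k \in nbhd e v :&: hole_set m c.
    by rewrite vE !inE eqxx.
  by rewrite in_setI mem_nbhd => /andP [].
by move=> u v /nbr uy /nbr vy; apply/negP => uv; exact: triangle_free uv vy uy.
Qed.

End ShortestHole.

Section Neighbourhoods.
Variables (m : nat) (c : nat -> T).
Hypothesis c_short : shortest_hole e m c.

Let c_hole : is_hole e m c := c_short.1.
Let m_ge10 : 10 <= m := shortest_hole_ge10 c_short.
Local Notation trace := (hole_trace e m c).

Lemma twin_path_trace j v : trace j v (pred2 1 3) ->
  forall t, t < 5 -> t != 2 -> e v (cv m c (j + t)) = odd t.
Proof. by move=> tr t lt_t5 t2; rewrite tr; [case: t lt_t5 t2 => [|[|[|[|[|]]]]] | lia]. Qed.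

Lemma Aset_Bset_adj j u w : u \in Aset e m c (j + 2) -> w \in Bset e m c (j + 2) -> e u w.
Proof.
have [lt_2m lt_3m] : 2 < m /\ 3 < m by lia.
move=> /(Aset_trace c_hole lt_3m) tr_u /(Bset_trace c_hole lt_2m) tr_w; apply/negPn/negP => uw.
apply: (no_X2_twins (shortest_hole_path c_short j) (y := w) (twin_path_trace tr_u)
          (twin_path_trace (hole_vertex_trace c_hole j lt_3m))).
- by rewrite /= tr_u.
- by rewrite /= tr_w.
- by rewrite e_sym.
- by move=> t lt_t5 t2; rewrite /= tr_w //; lia.
Qed.

Lemma shortest_hole_swap j u : u \in Aset e m c (j + 2) ->
  shortest_hole e m [eta c with (j + 2) %% m |-> u].
Proof.
have lt_3m : 3 < m by lia.
move=> /(Aset_trace c_hole lt_3m) tr_u; split; last exact: c_short.2.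
apply: (swap_is_hole e_sym e_irr c_hole (ltn_pmod _ _)); first lia.
  case: (boolP (u \in hole_set m c)) => [u_in|]; last by left.
  by right; exact: (hole_vertex_of_trace c_hole lt_3m u_in tr_u).
exact: (trace_twin c_hole tr_u (hole_vertex_trace c_hole j lt_3m)).
Qed.

Lemma Aset_nbhd j u x : u \in Aset e m c (j + 2) -> e u x ->
  x \in Bset e m c j :|: Aset e m c (j + 1) :|: Bset e m c (j + 2)
         :|: Aset e m c (j + 3) :|: Bset e m c (j + 4).
Proof.
have [lt_2m lt_3m lt_4m] : [/\ 2 < m, 3 < m & 4 < m] by split; lia.
move=> uA ux; have tr_u := (Aset_trace c_hole lt_3m).1 uA; rewrite !in_setU.
case: (boolP (x \in hole_set m c)) => [x_in|x_out].
  have [t lt_tm xE] := hole_setP c_hole j x_in; move: ux; rewrite xE tr_u //.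
  case/orP=> /eqP ->.
    by rewrite (Aset_trace c_hole lt_2m).2 ?orbT //; apply: hole_vertex_trace.
  by rewrite (Aset_trace c_hole lt_4m).2 ?orbT //; apply: hole_vertex_trace.
set c' := [eta c with (j + 2) %% m |-> u].
have x_out' : x \notin hole_set m c'.
  by apply/negP => /mem_hole_swap [xu|x_in]; [rewrite xu e_irr in ux | rewrite x_in in x_out].
have x2' : e x (cv m c' (j + 2)) by rewrite cv_swap // eqxx e_sym.
have swap p q := @hole_trace_swap _ e m c j 2 u x p q lt_2m.
case: (outside_trace_cases (shortest_hole_swap uA) x_out' x2') => /swap tr;
  case x2: (e x (cv m c (j + 2))).
- by rewrite (Bset_trace c_hole lt_2m).2 ?orbT //; apply: tr.
- exfalso; have {}tr := tr (fun=> false) (esym x2) (fun t => @negbTE _).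
  apply: (no_X2_twins (shortest_hole_path c_short j) (y := x)
            (twin_path_trace (hole_vertex_trace c_hole j lt_3m)) (twin_path_trace tr_u)).
  + by rewrite /= e_sym tr_u.
  + by rewrite e_sym.
  + by rewrite /= x2.
  + by move=> t lt_t5 _; rewrite /= tr //; lia.
- by rewrite (Aset_trace c_hole lt_4m).2 ?orbT //; apply: tr.
- by rewrite (Bset_trace c_hole lt_4m).2 ?orbT //; apply: tr => // t /negbTE /= ->.
- by rewrite (Aset_trace c_hole lt_2m).2 ?orbT //; apply: tr.
- rewrite -[j in Bset e m c j]addn0 (Bset_trace c_hole (ltnW (ltnW lt_2m))).2 //.
  by apply: tr => // t /negbTE /= ->; rewrite orbF.
Qed.

Lemma Bset_nbhd j w x : w \in Bset e m c (j + 2) -> e w x ->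
  x \in Aset e m c j :|: Bset e m c (j + 1) :|: Aset e m c (j + 2)
         :|: Bset e m c (j + 3) :|: Aset e m c (j + 4).
Proof.
have [lt_2m lt_3m] : 2 < m /\ 3 < m by lia.
move=> /(Bset_trace c_hole lt_2m) tr_w wx; rewrite !in_setU.
case: (boolP (x \in hole_set m c)) => [x_in|x_out].
  have [t lt_tm xE] := hole_setP c_hole j x_in; move: wx; rewrite xE tr_w // => /eqP ->.
  by rewrite (Aset_trace c_hole lt_3m).2 ?orbT //; apply: hole_vertex_trace.
have tr_w5 t : t < 5 -> e w (cv m c (j + t)) = (t == 2) by move=> lt_t5; apply: tr_w; lia.
case/orP: (pendant_nbr_flank (shortest_hole_path c_short j) tr_w5 wx) => [x1|x3].
  have x1' : e x (cv m c (j + m - 1 + 2)).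
    by rewrite (@cv_congr _ _ _ _ (j + 1)) //; apply: eqmod_addm; lia.
  have := outside_nbr_mem c_short x_out x1'.
  have -> : Aset e m c (j + m - 1 + 1) = Aset e m c j.
    by apply: Aset_congr; apply: eqmod_addm; lia.
  have -> : Bset e m c (j + m - 1 + 2) = Bset e m c (j + 1).
    by apply: Bset_congr; apply: eqmod_addm; lia.
  have -> : Aset e m c (j + m - 1 + 3) = Aset e m c (j + 2).
    by apply: Aset_congr; apply: eqmod_addm; lia.
  by rewrite !in_setU => /orP [/orP [] | ] ->; rewrite ?orbT.
have x3' : e x (cv m c (j + 1 + 2)) by rewrite -addnA.
have := outside_nbr_mem c_short x_out x3'; rewrite -!addnA.
by rewrite !in_setU => /orP [/orP [] | ] ->; rewrite ?orbT.
Qed.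

End Neighbourhoods.

End AlmostBipartitePermutationGraphs.

Theorem proposition3p5 (T : finType) (e : rel T) (m : nat) (c : nat -> T) :
  simple_graph e -> connected_graph e -> almost_bip_perm e ->
  shortest_hole e m c ->
  forall i, i < m ->
    let A := fun k => Aset e m c (k %% m) in
    let B := fun k => Bset e m c (k %% m) in
    [/\ independent e (A i) /\ independent e (B i),
        (forall u w, u \in A i -> w \in B i -> e u w),
        (forall u, u \in A i ->
           B i \subset nbhd e u /\
           nbhd e u \subset
             B (i + m - 2) :|: A (i + m - 1) :|: B i :|: A i.+1 :|: B i.+2) &
        (forall w, w \in B i ->
           A i \subset nbhd e w /\
           nbhd e w \subset
             A (i + m - 2) :|: B (i + m - 1) :|: A i :|: B i.+1 :|: A i.+2)].
Proof.
move=> [e_sym e_irr] _ e_abp c_short i _ A B.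
have m_ge10 := shortest_hole_ge10 e_abp c_short.
have [j jE] : exists j, j + 2 = i + m by exists (i + m - 2); lia.
have at_j k n : k = j + n \/ k + m = j + n ->
    A k = Aset e m c (j + n) /\ B k = Bset e m c (j + n).
  move=> idx; have kE : k %% m = j + n %[mod m].
    by rewrite modn_mod; apply/esym/eqmod_addm; lia.
  by split; [apply: Aset_congr | apply: Bset_congr].
have [A0 B0] := at_j (i + m - 2) 0 ltac:(lia).
have [A1 B1] := at_j (i + m - 1) 1 ltac:(lia).
have [A2 B2] := at_j i 2 ltac:(lia).
have [A3 B3] := at_j i.+1 3 ltac:(lia).
have [A4 B4] := at_j i.+2 4 ltac:(lia).
rewrite A0 B0 A1 B1 A2 B2 A3 B3 A4 B4 !addn0.
split.
- by split; [apply: Aset_independent | apply: Bset_independent].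
- exact: Aset_Bset_adj.
- move=> u uA; split; apply/subsetP => x; rewrite mem_nbhd.
    by move=> xB; apply: Aset_Bset_adj uA xB.
  exact: Aset_nbhd uA.
- move=> w wB; split; apply/subsetP => x; rewrite mem_nbhd.
    by move=> xA; rewrite e_sym; apply: Aset_Bset_adj xA wB.
  exact: Bset_nbhd wB.
Qed.
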